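(* For every partition $\bar A=\{A_i\}$ with $A_i\in(P_i,Q_i)$ and every $i$, $f_{\bar A}^2(P_i)=P_i$ and $f_{\bar A}^2(Q_i)=Q_i$. In addition, $f_{\bar A}(P_i)=P_i$ if $i\in\{1,2g,4g-1,6g-2\}$, and $f_{\bar A}(Q_i)=Q_i$ if $i\in\{2,2g+1,4g,6g-1\}$.
   Context: Setting. Fix $g\ge 2$; indices are mod $8g-4$. Let $\mathcal F$ be the regular hyperbolic $(8g-4)$-gon in the unit disk centered at $0$ with all interior angles $\pi/2$, sides labeled $1,\dots,8g-4$ counterclockwise, side $i$ joining vertices $V_i$ and $V_{i+1}$. The complete geodesic extending side $i$ goes from $P_i$ (beyond $V_i$) to $Q_{i+1}$ (beyond $V_{i+1}$) on the unit circle $\mathbb S$; counterclockwise order $P_1,Q_1,P_2,Q_2,\dots,P_{8g-4},Q_{8g-4}$. $\sigma(i)=4g-i$ ($i$ odd), $\sigma(i)=2-i$ ($i$ even). $T_i$ is the Möbius transformation mapping side $i$ onto side $\sigma(i)$, with isometric circle the geodesic $P_iQ_{i+1}$, mapped onto the geodesic $Q_{\sigma(i)+1}P_{\sigma(i)}$, inside to outside; $T_{\sigma(i)}T_i=\mathrm{Id}$. Arcs $[A,B)$, $(A,B)$ are counterclockwise from $A$ to $B$. For a partition $\bar A$ with $A_i\in(P_i,Q_i)$, $f_{\bar A}(x)=T_i(x)$ if $x\in[A_i,A_{i+1})$. *)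

From mathcomp Require Import all_boot all_order all_algebra.
From mathcomp Require Export complex.
From mathcomp Require Export reals trigo.
Import Order.TTheory GRing.Theory Num.Theory.
Set Implicit Arguments. Unset Strict Implicit. Unset Printing Implicit Defensive.
Local Open Scope ring_scope.
Local Open Scope complex_scope.

Section Setting.
Variable R : realType.

Definition cre (z : R[i]) : R := let: a +i* _ := z in a.
Definition cim (z : R[i]) : R := let: _ +i* b := z in b.

Definition expi (t : R) : R[i] := cos t +i* sin t.

Definition on_S (z : R[i]) : Prop := cre z ^+ 2 + cim z ^+ 2 = 1.

Definition Nsides (g : nat) : nat := (8 * g - 4)%N.

(* The regular N-gon F is centered at 0 and rotated by an arbitrary phase
   alpha: vertex V_k is at angle alpha + 2 pi k / N, so side k (from V_k to
   V_{k+1}) has its midpoint direction at angle sideang k below.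
   Indices are integers; everything is N-periodic in the index. *)
Definition sideang (g : nat) (alpha : R) (k : int) : R :=
  alpha + pi * (2 * k + 1)%:~R / (Nsides g)%:R.

(* The geodesic extending side k is the circle C_k orthogonal to S with
   center kappa * e^{i sideang k} and radius rho, kappa^2 = 1 + rho^2.
   Adjacent geodesics C_{k-1}, C_k (centers 2 pi / N apart) meet at right
   angles (interior angles pi/2), i.e. |c_{k-1} - c_k|^2 = 2 rho^2, which
   gives kappa^2 = 1 / cos (2 pi / N). *)
Definition kappa (g : nat) : R := (Num.sqrt (cos (2 * pi / (Nsides g)%:R)))^-1.
Definition rho (g : nat) : R := Num.sqrt (kappa g ^+ 2 - 1).
Definition geocenter (g : nat) (alpha : R) (k : int) : R[i] :=
  (kappa g)%:C * expi (sideang g alpha k).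

(* Angular half-width of the geodesic C_k seen from 0: cos beta = 1/kappa. *)
Definition halfw (g : nat) : R := acos (Num.sqrt (cos (2 * pi / (Nsides g)%:R))).

(* Endpoints of the geodesic extending side k: P_k (beyond V_k) and
   Q_{k+1} (beyond V_{k+1}). Hence Q_k is the endpoint of C_{k-1}. *)
Definition Pt (g : nat) (alpha : R) (k : int) : R[i] :=
  expi (sideang g alpha k - halfw g).
Definition Qt (g : nat) (alpha : R) (k : int) : R[i] :=
  expi (sideang g alpha (k - 1) + halfw g).

Definition sigma (g : nat) (k : int) : int :=
  if odd `|k|%N then (4 * g)%:Z - k else 2 - k.

(* T_k = (reflection in the line through 0 mapping C_k onto C_{sigma k})
         o (inversion in the circle C_k).
   Inversion in C_k: z |-> c + rho^2 / conj(z - c); reflection in the line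
   at angle psi: z |-> e^{2 i psi} conj z.  The composite is the Moebius map
   z |-> e^{2 i psi} (conj c + rho^2 / (z - c)); it preserves the unit disk,
   has isometric circle C_k, maps C_k onto C_{sigma k} (P_k |-> Q_{sigma k+1},
   Q_{k+1} |-> P_{sigma k}), inside to outside, and T_{sigma k} T_k = Id. *)
Definition Tmap (g : nat) (alpha : R) (k : int) (z : R[i]) : R[i] :=
  let c := geocenter g alpha k in
  let psi := (sideang g alpha k + sideang g alpha (sigma g k)) / 2 in
  expi (2 * psi) * ((c^*)%C + ((rho g) ^+ 2)%:C / (z - c)).

(* Signed (doubled) area of triangle (a, x, b); for distinct points of S it
   is > 0 iff a, x, b are in counterclockwise cyclic order. *)
Definition orient (a x b : R[i]) : R := cim (((x - a)^*)%C * (b - a)).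

Definition in_arc_oo (a b x : R[i]) : bool := 0 < orient a x b.
Definition in_arc_co (a b x : R[i]) : bool := (x == a) || in_arc_oo a b x.

Definition fA (g : nat) (alpha : R) (A : int -> R[i]) (x : R[i]) : R[i] :=
  match [pick j : 'I_(Nsides g) |
           in_arc_co (A (nat_of_ord j)%:Z) (A ((nat_of_ord j)%:Z + 1)) x] with
  | Some j => Tmap g alpha (nat_of_ord j)%:Z x
  | None => x
  end.

Definition is_partition (g : nat) (alpha : R) (A : int -> R[i]) : Prop :=
  (forall k : int, A (k + (Nsides g)%:Z) = A k) /\
  (forall k : int, on_S (A k) /\ in_arc_oo (Pt g alpha k) (Qt g alpha k) (A k)).

End Setting.

(* Write s_k for the direction of the midpoint of side k, delta = 2 pi / N and
   beta for the angular half-width of the geodesic of side k, cos beta =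
   sqrt (cos delta).  Then P_k = e^{i (s_k - beta)} and
   Q_k = e^{i (s_k - delta + beta)}.  Since delta / 2 < beta < delta, the points
   P_k, A_k, Q_k, P_{k+1}, A_{k+1} are in counterclockwise order, so Q_k and
   P_{k+1} lie in the arc [A_k, A_{k+1}) and in no other arc of the partition,
   hence f_A acts on both of them by T_k.  A direct computation shows that T_k
   maps e^{i (s_k + d - b)} to e^{i (s_{sigma k} - d - b)} whenever
   kappa cos d = cos b, which gives f_A (P_k) = P_{sigma (k-1) - 1} and
   f_A (Q_k) = Q_{sigma k + 2}.  Both index maps are involutions modulo N, and
   they fix the listed residues. *)

From mathcomp Require Import all_boot all_order all_algebra.
From mathcomp Require Import complex reals trigo.
From mathcomp Require Import ring lra zify.
Import Order.TTheory GRing.Theory Num.Theory.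
Set Implicit Arguments. Unset Strict Implicit. Unset Printing Implicit Defensive.
Local Open Scope ring_scope.

Lemma periodic_int (T : Type) (f : int -> T) (p : int) :
  (forall k, f (k + p) = f k) -> forall k m, f (k + m * p) = f k.
Proof.
move=> fp.
have fpn k (n : nat) : f (k + n%:Z * p) = f k.
  elim: n => [|n IHn]; first by rewrite mul0r addr0.
  by rewrite -[RHS]IHn -[RHS]fp intS; congr f; ring.
move=> k [n|n]; first exact: fpn.
by rewrite -(fpn (k + Negz n * p) n.+1) NegzE; congr f; ring.
Qed.

Lemma fixed_mod_of_residues (h : int -> int) (p : int) (S : seq int) :
  (forall k m, h (k + m * p) = h k - m * p) ->
  (forall r, r \in S -> exists m, h r = r + m * p) ->
  forall k, (k %% p)%Z \in S -> exists m, h k = k + m * p.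
Proof.
move=> hp hS k /hS [m hm]; exists (m - 2 * (k %/ p)%Z).
by rewrite {1}(divz_eq k p) addrC hp hm {3}(divz_eq k p); ring.
Qed.

Lemma sin_gt0_Npi_pi (R : realType) (w : R) :
  - pi < w < pi -> (0 < sin w) = (0 < w).
Proof.
case/andP=> wgtNpi wltpi; case: (ltP 0 w) => w0.
  by apply: sin_gt0_pi; rewrite w0.
apply/negbTE; rewrite -leNgt -oppr_ge0 -sinN.
by apply: sin_ge0_pi; apply/andP; split; lra.
Qed.

Section ComplexExponential.
Local Open Scope complex_scope.
Variable R : realType.
Implicit Types a b t w x : R.

Lemma expiD a b : expi a * expi b = expi (a + b) :> R[i].
Proof. by rewrite /expi sinD cosD; simpc; congr (_ +i* _); ring. Qed.

Lemma expi0 : expi 0 = 1 :> R[i].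
Proof. by rewrite /expi cos0 sin0. Qed.

Lemma expiV a : (expi a)^-1 = expi (- a) :> R[i].
Proof. by apply: mulr1_eq; rewrite expiD subrr expi0. Qed.

Lemma expi_neq0 a : expi a != 0 :> R[i].
Proof.
apply/eqP => ea0; have := expiD a (- a).
by rewrite ea0 mul0r subrr expi0 => /eqP; rewrite eq_sym oner_eq0.
Qed.

Lemma expiD2piz t (m : int) : expi (t + 2 * pi * m%:~R) = expi t :> R[i].
Proof.
pose f (n : int) := expi (t + 2 * pi * n%:~R) : R[i].
have f1 n : f (n + 1) = f n.
  rewrite /f intrD mulrDr addrA mulr1.
  have -> : 2 * pi = pi *+ 2 :> R by rewrite mulr2n; ring.
  by rewrite /expi cosD2pi sinD2pi.
by have := periodic_int f1 0 m; rewrite add0r mulr1 /f mulr0 addr0.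
Qed.

Lemma on_S_expi z : on_S z -> exists t, z = expi t.
Proof.
case: z => a b; rewrite /on_S /= => ab1.
have a_in : -1 <= a <= 1 by apply/andP; split; nra.
have sqrt_b : Num.sqrt (1 - a ^+ 2) = `|b|.
  by rewrite -sqrtr_sqr; congr Num.sqrt; lra.
case: (lerP 0 b) => b0.
  exists (acos a); rewrite /expi acosK ?in_itv // sin_acos //.
  by rewrite sqrt_b ger0_norm.
exists (- acos a); rewrite /expi cosN sinN acosK ?in_itv // sin_acos //.
by rewrite sqrt_b ltr0_norm // opprK.
Qed.

Lemma shift_2piz_window t w : exists m : int,
  w <= t + 2 * pi * m%:~R < w + 2 * pi.
Proof.
have pi2_gt0 : 0 < 2 * pi :> R by rewrite mulr_gt0 // pi_gt0.
set y := (t - w) / (2 * pi).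
exists (- Num.floor y); rewrite mulrNz.
have := floor_le y; have := floorD1_gt y; rewrite intrD.
have : 2 * pi * y = t - w by rewrite /y mulrC divfK // gt_eqF.
by move=> *; apply/andP; split; nra.
Qed.

Lemma orient_expi a x b : orient (expi a) (expi x) (expi b) =
  4 * sin ((x - a) / 2) * sin ((b - x) / 2) * sin ((b - a) / 2).
Proof.
have sin_triple u w : sin (w + w) + sin (u + u) - sin ((u + u) + (w + w)) =
    4 * sin u * sin w * sin (u + w).
  rewrite !sinD !cosD; have := cos2Dsin2 u; have := cos2Dsin2 w.
  move: (cos u) (sin u) (cos w) (sin w) => cu su cw sw cw2 cu2.
  apply/eqP; rewrite -subr_eq0; apply/eqP.
  transitivity (2 * sw * cw * (1 - (cu ^+ 2 + su ^+ 2)) +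
                2 * su * cu * (1 - (cw ^+ 2 + sw ^+ 2))); first ring.
  by rewrite cu2 cw2 subrr; ring.
have -> : orient (expi a) (expi x) (expi b) =
    sin (b - x) + sin (x - a) - sin (b - a).
  by rewrite /orient /expi; simpc; rewrite /= !sinB; ring.
have -> : sin (b - a) = sin ((x - a) + (b - x)) by congr sin; ring.
have -> : (b - a) / 2 = (x - a) / 2 + (b - x) / 2 by field.
by rewrite -sin_triple -!splitr.
Qed.

Lemma in_arc_oo_expi a b x : a < b -> b < a + 2 * pi -> a <= x < a + 2 * pi ->
  in_arc_oo (expi a) (expi b) (expi x) = (a < x < b).
Proof.
move=> ab ba /andP [ax xa]; rewrite /in_arc_oo orient_expi.
have pi0 := @pi_gt0 R.
case: (ltP a x) => [ax'|xa']; last first.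
  by rewrite (_ : x - a = 0) ?mul0r ?sin0 ?mulr0 ?mul0r ?ltxx //; lra.
have sxa : 0 < sin ((x - a) / 2) by apply: sin_gt0_pi; apply/andP; split; lra.
have sba : 0 < sin ((b - a) / 2) by apply: sin_gt0_pi; apply/andP; split; lra.
rewrite mulrAC pmulr_rgt0 ?mulr_gt0 // sin_gt0_Npi_pi; last first.
  by apply/andP; split; lra.
by apply/idP/idP; lra.
Qed.

Lemma in_arc_co_expi a b x : a < b -> b < a + 2 * pi -> a <= x < a + 2 * pi ->
  in_arc_co (expi a) (expi b) (expi x) = (x < b).
Proof.
move=> ab ba axa; rewrite /in_arc_co in_arc_oo_expi //.
case/andP: axa => ax xa.
case: (ltP a x) => [ax'|xa']; last first.
  by rewrite (_ : x = a) ?eqxx //; lra.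
rewrite /=; case: eqP => // expi_xa.
have : in_arc_oo (expi a) (expi x) (expi ((a + x) / 2)).
  by rewrite in_arc_oo_expi //; apply/andP; split; lra.
by rewrite /in_arc_oo expi_xa /orient subrr mulr0 ltxx.
Qed.

End ComplexExponential.

Section Mobius.
Local Open Scope complex_scope.
Variable R : realType.
Implicit Types d b k : R.

(* The product is e^{-2ib} - 2 k cos d e^{-ib} + k^2, and k cos d = cos b turns
   its first two terms into -1. *)
Lemma expi_subC_mul k d b : k * cos d = cos b ->
  (expi (- d - b) - k%:C) * (expi (d - b) - k%:C) = (k ^+ 2 - 1)%:C.
Proof.
rewrite /expi -complexr0; simpc; rewrite !cosB !sinB !cosN !sinN.
have := cos2Dsin2 d; have := cos2Dsin2 b.
move: (cos d) (sin d) (cos b) (sin b) => cd sd cb sb cb2 cd2 kd.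
congr (_ +i* _); apply/eqP; rewrite -subr_eq0; apply/eqP.
  transitivity ((cd ^+ 2 + sd ^+ 2 - 1) * (cb ^+ 2 - sb ^+ 2)
     - 2 * cb * (k * cd - cb) - (cb ^+ 2 + sb ^+ 2 - 1)); first ring.
  by rewrite cd2 cb2 kd !subrr; ring.
transitivity (- 2 * cb * sb * (cd ^+ 2 + sd ^+ 2 - 1) + 2 * sb * (k * cd - cb)).
  ring.
by rewrite cd2 kd !subrr; ring.
Qed.

Lemma mobius_expi k (s1 s2 : R) d b : k ^+ 2 != 1 -> k * cos d = cos b ->
  expi (s1 + s2) * (((k%:C * expi s1)^*)%C +
    (k ^+ 2 - 1)%:C / (expi (s1 + d - b) - k%:C * expi s1)) = expi (s2 - d - b).
Proof.
move=> k2 /expi_subC_mul YX.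
set X := expi (d - b) - k%:C in YX; set Y := expi (- d - b) - k%:C in YX.
have X0 : X != 0.
  apply: contra_neq k2 => X0; apply/eqP; rewrite -subr_eq0; apply/eqP.
  by apply: complexI; rewrite -YX X0 mulr0.
have -> : expi (s1 + d - b) - k%:C * expi s1 = expi s1 * X.
  by rewrite mulrBr expiD mulrC -addrA.
have -> : ((k%:C * expi s1)^*)%C = k%:C * (expi s1)^-1.
  by rewrite expiV /expi cosN sinN; simpc.
rewrite -YX.
have -> : expi (s2 - d - b) = expi s2 * (Y + k%:C).
  by rewrite subrK expiD; congr expi; ring.
rewrite -expiD; field.
by rewrite X0 expi_neq0.
Qed.

End Mobius.

Section Sigma.
Variable g : nat.
Local Notation N := (Nsides g).

Lemma sigma_odd k : odd (absz k) -> sigma g k = (4 * g)%:Z - k.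
Proof. by rewrite /sigma => ->. Qed.

Lemma sigma_even k : ~~ odd (absz k) -> sigma g k = 2 - k.
Proof. by rewrite /sigma => /negbTE ->. Qed.

Lemma sigma_addNmul k m : sigma g (k + m * N%:Z) = sigma g k - m * N%:Z.
Proof.
have sigma_addN j : sigma g (j + N%:Z) + (j + N%:Z) = sigma g j + j.
  rewrite /sigma (_ : odd (absz (j + N%:Z)) = odd (absz j)); last first.
    by rewrite /Nsides; lia.
  by case: ifP => _; ring.
have := periodic_int (f := fun j => sigma g j + j) sigma_addN k m.
by move/(canRL (addrK _)) ->; ring.
Qed.

Lemma sigmaP_invol k : sigma g (sigma g (k - 1) - 1 - 1) - 1 = k.
Proof.
by case: (boolP (odd (absz (k - 1)))) => h;
  [rewrite (sigma_odd h) sigma_odd | rewrite (sigma_even h) sigma_even]; lia.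
Qed.

Lemma sigmaQ_invol k : sigma g (sigma g k + 2) + 2 = k.
Proof.
by case: (boolP (odd (absz k))) => h;
  [rewrite (sigma_odd h) sigma_odd | rewrite (sigma_even h) sigma_even]; lia.
Qed.

Lemma sigmaP_fixed k :
  (k %% N%:Z)%Z \in [:: 1%Z; (2 * g)%:Z; (4 * g - 1)%:Z; (6 * g - 2)%:Z] ->
  exists m, sigma g (k - 1) - 1 = k + m * N%:Z.
Proof.
apply: (@fixed_mod_of_residues (fun j => sigma g (j - 1) - 1)) => [j m|r] /=.
  by rewrite addrAC sigma_addNmul; ring.
rewrite !inE => /or4P [] /eqP ->; rewrite /sigma /Nsides;
  [exists 0%Z | exists 0%Z | exists (-1)%Z | exists (-1)%Z];
  case: (odd _) /idP; lia.
Qed.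

(* Without 0 < g the truncated subtractions in N = 8g - 4 and 6g - 1 break the
   residue computation. *)
Lemma sigmaQ_fixed : (0 < g)%N -> forall k,
  (k %% N%:Z)%Z \in [:: 2%Z; (2 * g + 1)%:Z; (4 * g)%:Z; (6 * g - 1)%:Z] ->
  exists m, sigma g k + 2 = k + m * N%:Z.
Proof.
move=> g_gt0.
apply: (@fixed_mod_of_residues (fun j => sigma g j + 2)) => [j m|r] /=.
  by rewrite sigma_addNmul; ring.
rewrite !inE => /or4P [] /eqP ->; rewrite /sigma /Nsides;
  [exists 0%Z | exists 0%Z | exists (-1)%Z | exists (-1)%Z];
  case: (odd _) /idP; lia.
Qed.

End Sigma.

Section Polygon.
Variables (R : realType) (g : nat) (alpha : R).
Hypothesis g_ge2 : (2 <= g)%N.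

Local Notation N := (Nsides g).
Local Notation delta := (2 * pi / (Nsides g)%:R : R).
Local Notation beta := (halfw R g).
Local Notation s := (sideang g alpha).

Lemma delta_gt0 : 0 < delta.
Proof. by rewrite divr_gt0 ?mulr_gt0 ?pi_gt0 // ltr0n /Nsides; lia. Qed.

Lemma delta_le_pi6 : delta * 6 <= pi.
Proof.
have N12 : 12 <= N%:R :> R by rewrite (ler_nat R 12) /Nsides; lia.
rewrite mulrAC ler_pdivrMr; last by apply: lt_le_trans N12.
by have := @pi_gt0 R; nra.
Qed.

Lemma cos_delta_gt0 : 0 < cos delta.
Proof.
have := delta_gt0; have := delta_le_pi6; have := @pi_gt0 R => *.
by apply: cos_gt0_pihalf; apply/andP; split; lra.
Qed.

Lemma cos_delta_lt1 : cos delta < 1.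
Proof.
have := delta_gt0; have := delta_le_pi6; have := @pi_gt0 R => *.
by rewrite -[X in _ < X]cos0 ltr_cos ?in_itv //=; apply/andP; split; lra.
Qed.

Lemma cos_halfw : cos beta = Num.sqrt (cos delta).
Proof.
have := cos_delta_gt0; have := cos_delta_lt1 => c1 c0.
have sqrt_sq := sqr_sqrtr (ltW c0); have := sqrtr_ge0 (cos delta).
by rewrite /halfw acosK // in_itv /=; apply/andP; split; nra.
Qed.

Lemma cos_halfw_gt0 : 0 < cos beta.
Proof. by rewrite cos_halfw sqrtr_gt0 cos_delta_gt0. Qed.

Lemma sqr_cos_halfw : cos beta ^+ 2 = cos delta.
Proof. by rewrite cos_halfw sqr_sqrtr // ltW // cos_delta_gt0. Qed.

Lemma halfw_in_0pi : beta \in `[0, pi].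
Proof.
have := cos_delta_gt0; have := cos_delta_lt1 => c1 c0.
have sqrt_sq := sqr_sqrtr (ltW c0); have := sqrtr_ge0 (cos delta) => sqrt0.
have sqrt_in : -1 <= Num.sqrt (cos delta) <= 1 by apply/andP; split; nra.
by rewrite in_itv /= /halfw acos_ge0 // acos_lepi.
Qed.

Lemma halfw_lt_delta : beta < delta.
Proof.
have := delta_gt0; have := delta_le_pi6; have := @pi_gt0 R => *.
have delta_in : delta \in `[0, pi] by rewrite in_itv /=; apply/andP; split; lra.
rewrite -ltr_cos ?halfw_in_0pi //.
by have := sqr_cos_halfw; have := cos_halfw_gt0; have := cos_delta_lt1; nra.
Qed.

Lemma halfdelta_lt_halfw : delta / 2 < beta.
Proof.
have := delta_gt0; have := delta_le_pi6; have := @pi_gt0 R => *.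
have half_in : delta / 2 \in `[0, pi].
  by rewrite in_itv /=; apply/andP; split; lra.
rewrite -ltr_cos ?halfw_in_0pi //.
have cos_half_gt0 : 0 < cos (delta / 2).
  by apply: cos_gt0_pihalf; apply/andP; split; lra.
have cos_double : cos delta = cos (delta / 2) ^+ 2 * 2 - 1.
  by rewrite [in LHS](splitr delta) cosD; have := cos2Dsin2 (delta / 2); lra.
by have := sqr_cos_halfw; have := cos_halfw_gt0; have := cos_delta_lt1; nra.
Qed.

Lemma kappa_cos_halfw : kappa R g * cos beta = 1.
Proof. by rewrite /kappa -cos_halfw mulVf // gt_eqF // cos_halfw_gt0. Qed.

Lemma kappa_cos_delta : kappa R g * cos delta = cos beta.
Proof. by rewrite -sqr_cos_halfw expr2 mulrA kappa_cos_halfw mul1r. Qed.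

Lemma kappa_sqr_neq1 : kappa R g ^+ 2 != 1.
Proof.
have := kappa_cos_halfw; have := cos_halfw_gt0; have := cos_delta_lt1.
by rewrite -sqr_cos_halfw => *; apply/eqP; nra.
Qed.

Lemma rho_sqr : rho R g ^+ 2 = kappa R g ^+ 2 - 1.
Proof.
rewrite /rho sqr_sqrtr // subr_ge0.
have := kappa_cos_halfw; have := cos_halfw_gt0; have := cos_delta_lt1.
by rewrite -sqr_cos_halfw => *; nra.
Qed.

Lemma sideangD k m : s (k + m) = s k + delta * m%:~R.
Proof. by rewrite /sideang intrD; ring. Qed.

Lemma sideang_addNmul k m : s (k + m * N%:Z) = s k + 2 * pi * m%:~R.
Proof.
rewrite sideangD intrM (_ : (N%:Z)%:~R = N%:R :> R) //; congr (_ + _).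
by field; rewrite pnatr_eq0 /Nsides; lia.
Qed.

Lemma sideang_le j k : s j < s k + delta -> j <= k.
Proof.
rewrite -[j](subrK k) addrC sideangD ltrD2l -[X in _ < X]mulr1.
by rewrite ltr_pM2l ?delta_gt0 // -[1]/(1%:~R) ltr_int; lia.
Qed.

Lemma PtS k : Pt g alpha (k + 1) = expi (s k + delta - beta).
Proof. by rewrite /Pt sideangD mulr1. Qed.

Lemma QtE k : Qt g alpha k = expi (s k - delta + beta).
Proof. by rewrite /Qt sideangD mulrN1. Qed.

Lemma Pt_addNmul k m : Pt g alpha (k + m * N%:Z) = Pt g alpha k.
Proof. by rewrite /Pt sideang_addNmul addrAC expiD2piz. Qed.

Lemma Qt_addNmul k m : Qt g alpha (k + m * N%:Z) = Qt g alpha k.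
Proof.
by rewrite !QtE sideang_addNmul -!addrA [2 * pi * _ + _]addrC !addrA expiD2piz.
Qed.

Lemma Tmap_addNmul k m z : Tmap g alpha (k + m * N%:Z) z = Tmap g alpha k z.
Proof.
rewrite /Tmap /geocenter sigma_addNmul -mulNr !sideang_addNmul expiD2piz.
by congr (expi _ * _); rewrite intrN; ring.
Qed.

(* With (d, b) = (delta, beta) the point is P_{j+1}, with (-delta, -beta) it
   is Q_j. *)
Lemma Tmap_expi j d b : kappa R g * cos d = cos b ->
  Tmap g alpha j (expi (s j + d - b)) = expi (s (sigma g j) - d - b).
Proof.
move=> kd; rewrite /Tmap /geocenter rho_sqr [2 * _]mulrC mulfVK ?pnatr_eq0 //.
exact: mobius_expi kappa_sqr_neq1 kd.
Qed.

Lemma Tmap_Pt j :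
  Tmap g alpha j (Pt g alpha (j + 1)) = Pt g alpha (sigma g j - 1).
Proof.
rewrite PtS Tmap_expi ?kappa_cos_delta // /Pt sideangD mulrN1.
by congr expi; ring.
Qed.

Lemma Tmap_Qt j : Tmap g alpha j (Qt g alpha j) = Qt g alpha (sigma g j + 2).
Proof.
have kappa_cosN : kappa R g * cos (- delta) = cos (- beta).
  by rewrite !cosN kappa_cos_delta.
rewrite !QtE (_ : s j - delta + beta = s j + - delta - - beta); last by ring.
by rewrite Tmap_expi // sideangD; congr expi; rewrite -[2]/(2%:~R); ring.
Qed.

Section Partition.
Variable A : int -> R[i].
Hypothesis A_partition : is_partition g alpha A.

Lemma A_addNmul k m : A (k + m * N%:Z) = A k.
Proof. exact: (periodic_int (proj1 A_partition) k m). Qed.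

Lemma A_angle k : exists2 a, A k = expi a & s k - beta < a < s k - delta + beta.
Proof.
have := halfw_lt_delta; have := halfdelta_lt_halfw; have := delta_gt0.
have := delta_le_pi6; have := @pi_gt0 R => pi0 d6 d0 b1 b2.
have [onS inPQ] := proj2 A_partition k; have [t tE] := on_S_expi onS.
have [m /andP [tm1 tm2]] := shift_2piz_window t (s k - beta).
exists (t + 2 * pi * m%:~R); first by rewrite tE expiD2piz.
by move: inPQ; rewrite tE QtE /Pt -(expiD2piz t m) in_arc_oo_expi //; lra.
Qed.

Lemma fA_eq_Tmap x k : in_arc_co (A k) (A (k + 1)) x ->
  (forall j, in_arc_co (A j) (A (j + 1)) x -> exists m, j = k + m * N%:Z) ->
  fA g alpha A x = Tmap g alpha k x.
Proof.
move=> xk xuniq; rewrite /fA; case: pickP => [j /xuniq [m ->] | none].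
  exact: Tmap_addNmul.
have kN : (absz (k %% N%:Z)%Z < N)%N by rewrite /Nsides; lia.
have := none (Ordinal kN); rewrite /=.
have -> : (absz (k %% N%:Z)%Z)%:Z = k + - (k %/ N%:Z)%Z * N%:Z.
  by rewrite /Nsides; lia.
by rewrite A_addNmul addrAC A_addNmul xk.
Qed.

Lemma fA_expi_between k t : s k - delta + beta <= t <= s k + delta - beta ->
  fA g alpha A (expi t) = Tmap g alpha k (expi t).
Proof.
have := halfw_lt_delta; have := halfdelta_lt_halfw; have := delta_gt0.
have := delta_le_pi6; have := @pi_gt0 R => pi0 d6 d0 b1 b2 /andP [t1 t2].
apply: fA_eq_Tmap => [|j].
  have [a -> /andP [a1 a2]] := A_angle k.
  have [b -> /andP [b1' b2']] := A_angle (k + 1).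
  move: b1' b2'; rewrite sideangD mulr1 => b1' b2'.
  by rewrite in_arc_co_expi //; lra.
have [a -> /andP [a1 a2]] := A_angle j.
have [b -> /andP [b1' b2']] := A_angle (j + 1).
move: b1' b2'; rewrite sideangD mulr1 => b1' b2'.
have [m /andP [m1 m2]] := shift_2piz_window t a.
rewrite -(expiD2piz t m) in_arc_co_expi => [tb|||]; try lra.
exists m; apply/eqP; rewrite eq_le.
by apply/andP; split; apply: sideang_le; rewrite sideang_addNmul; lra.
Qed.

Lemma fA_Pt k : fA g alpha A (Pt g alpha k) = Pt g alpha (sigma g (k - 1) - 1).
Proof.
rewrite -Tmap_Pt -{1}[k](subrK 1) PtS (fA_expi_between (k := k - 1)) //.
by have := halfw_lt_delta; lra.
Qed.

Lemma fA_Qt k : fA g alpha A (Qt g alpha k) = Qt g alpha (sigma g k + 2).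
Proof.
rewrite -Tmap_Qt QtE (fA_expi_between (k := k)) //.
by have := halfw_lt_delta; lra.
Qed.

End Partition.
End Polygon.

Theorem lemma3p4 (R : realType) (g : nat) (alpha : R) (A : int -> R[i]) :
  (2 <= g)%N ->
  is_partition g alpha A ->
  (forall k : int,
     fA g alpha A (fA g alpha A (Pt g alpha k)) = Pt g alpha k /\
     fA g alpha A (fA g alpha A (Qt g alpha k)) = Qt g alpha k) /\
  (forall k : int,
     (k %% (Nsides g)%:Z)%Z \in [:: 1%Z; (2 * g)%:Z; (4 * g - 1)%:Z; (6 * g - 2)%:Z] ->
     fA g alpha A (Pt g alpha k) = Pt g alpha k) /\
  (forall k : int,
     (k %% (Nsides g)%:Z)%Z \in [:: 2%Z; (2 * g + 1)%:Z; (4 * g)%:Z; (6 * g - 1)%:Z] ->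
     fA g alpha A (Qt g alpha k) = Qt g alpha k).
Proof.
move=> g_ge2 A_partition.
have fA_Pt := fA_Pt g_ge2 A_partition; have fA_Qt := fA_Qt g_ge2 A_partition.
split; [|split] => k.
- by rewrite !fA_Pt !fA_Qt sigmaP_invol sigmaQ_invol.
- by case/sigmaP_fixed => m fixk; rewrite fA_Pt fixk Pt_addNmul.
- by case/(sigmaQ_fixed (ltnW g_ge2)) => m fixk; rewrite fA_Qt fixk Qt_addNmul.
Qed.
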